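(* Let $\mathcal X$ be a non-empty finite set, $\mathcal A_x$ non-empty finite sets, $\mathcal Z=\{(x,a):x\in\mathcal X,a\in\mathcal A_x\}$, $P(x,a,\cdot)$ probability measures on $\mathcal X$, $S(x,a,y,\cdot)$ probability measures on $\mathbb R$ with finite second moments, and $\gamma\in[0,1)$. For a function $\varepsilon:\mathcal X\to[0,1]$, a function $q:\mathcal Z\to\mathbb R$ and $x\in\mathcal X$, define the probability measure $\pi^\varepsilon_q(x,\cdot)$ on $\mathcal A_x$ by $$\pi^\varepsilon_q(x,a)=\frac{\varepsilon(x)}{|\mathcal A_x|}+\mathbf 1_{\{a\in\arg\max q(x,\cdot)\}}\frac{1-\varepsilon(x)}{|\arg\max q(x,\cdot)|},$$ and define $\mathcal H(\varepsilon,q):\mathcal Z\to\mathbb R$ by $\mathcal H(\varepsilon,q)(x,a)=Q_{\pi^\varepsilon_q}(x,a)$. Then $\mathcal H(\varepsilon,q)(x,a)\le Q^*(x,a)$ for all $(x,a)\in\mathcal Z$ and $$\|\mathcal H(\varepsilon,q)-Q^*\|_\infty\le\frac{\gamma}{1-\gamma}\Big(\|Q^*-q\|_\infty+\|(q-Q^* )_+\|_\infty+2\|Q^*\|_\infty\|\varepsilon\|_\infty\Big),$$ where $(q-Q^* )_+(x,a)=\max\{q(x,a)-Q^*(x,a),0\}$ and $\|\cdot\|_\infty$ denotes the max norm.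
   Context: For an SM policy $\pi$ (a family of probability measures $\pi(x,\cdot)$ on $\mathcal A_x$) and $x\in\mathcal X$: $X_0=x$, $A_t\sim\pi(X_t,\cdot)$, $X_{t+1}\sim P(X_t,A_t,\cdot)$ given the past, and conditionally on the state-action process the rewards $R_{t+1}\sim S(X_t,A_t,X_{t+1},\cdot)$ are independent; $V_\pi(x)=\mathbb E_{x,\pi}[\sum_{t\ge0}\gamma^tR_{t+1}]$. General (history-dependent) policies $\Pi$ are defined analogously with $A_t$ drawn from $\Pi_t(H_t,\cdot)$, $H_t=(X_0,A_0,\dots,X_t)$, and $V^*(x)=\sup_\Pi V_\Pi(x)$. Let $g(x,a,y)=\int z\,S(x,a,y,dz)$, $r(x,a)=\sum_yP(x,a,y)g(x,a,y)$, $Q_\pi(x,a)=r(x,a)+\gamma\sum_yP(x,a,y)V_\pi(y)$ and $Q^*(x,a)=r(x,a)+\gamma\sum_yP(x,a,y)V^*(y)$. *)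

From HB Require Import structures.
From mathcomp Require Import all_boot all_order all_algebra.
From mathcomp Require Import all_classical all_reals all_analysis.
Set Implicit Arguments. Unset Strict Implicit. Unset Printing Implicit Defensive.
Import Order.TTheory GRing.Theory Num.Theory.
Import numFieldNormedType.Exports.
Local Open Scope classical_set_scope.
Local Open Scope ring_scope.

Section MDP.
Variables (R : realType) (X Act : finType) (A : X -> {set Act}).
Variables (P : X -> Act -> X -> R) (g : X -> Act -> X -> R) (gamma : R).

Definition mean_reward (S : X -> Act -> X -> probability R R) (x : X) (a : Act)
  (y : X) : R := fine (\int[S x a y]_z (z%:E))%E.

(* General (history-dependent) policies: Pi t h x a is the probability of
   action a at time t given history H_t = (X_0,A_0,...,X_{t-1},A_{t-1},X_t),
   encoded as the list h = [(X_0,A_0);...;(X_{t-1},A_{t-1})] and x = X_t. *)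
Definition gpolicy := nat -> seq (X * Act) -> X -> Act -> R.

Definition is_gpolicy (Pi : gpolicy) : Prop :=
  forall t h x, [/\ forall a, 0 <= Pi t h x a,
                    forall a, a \notin A x -> Pi t h x a = 0 &
                    \sum_(a : Act) Pi t h x a = 1].

Definition is_smpolicy (pi : X -> Act -> R) : Prop :=
  forall x, [/\ forall a, 0 <= pi x a,
                forall a, a \notin A x -> pi x a = 0 &
                \sum_(a : Act) pi x a = 1].

Definition gpolicy_of_sm (pi : X -> Act -> R) : gpolicy := fun _ _ x a => pi x a.

(* J n h x = E[ sum_{k = t}^{t+n-1} gamma^(k-t) R_{k+1} | H_t = (h, x) ],
   t = size h; by conditional independence of rewards only the means g matter *)
Fixpoint horizon_value (Pi : gpolicy) (n : nat) (h : seq (X * Act)) (x : X) : R :=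
  match n with
  | 0 => 0
  | n'.+1 => \sum_(a : Act) Pi (size h) h x a *
       \sum_(y : X) P x a y * (g x a y + gamma * horizon_value Pi n' (rcons h (x, a)) y)
  end.

(* V_Pi(x) = E_{x,Pi}[sum_t gamma^t R_{t+1}] = lim_n E_{x,Pi}[sum_{t<n} gamma^t R_{t+1}] *)
Definition value (Pi : gpolicy) (x : X) : R :=
  limn (fun n => horizon_value Pi n [::] x).

Definition Vstar (x : X) : R :=
  sup [set value Pi x | Pi in [set Pi | is_gpolicy Pi]].

Definition rew (x : X) (a : Act) : R := \sum_(y : X) P x a y * g x a y.

Definition Qpol (pi : X -> Act -> R) (x : X) (a : Act) : R :=
  rew x a + gamma * \sum_(y : X) P x a y * value (gpolicy_of_sm pi) y.

Definition Qstar (x : X) (a : Act) : R :=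
  rew x a + gamma * \sum_(y : X) P x a y * Vstar y.

Definition argmaxA (q : X -> Act -> R) (x : X) : {set Act} :=
  [set a in A x | [forall b in A x, q x b <= q x a]].

Definition eps_greedy (eps : X -> R) (q : X -> Act -> R) (x : X) (a : Act) : R :=
  (a \in A x)%:R * (eps x / #|A x|%:R
     + (a \in argmaxA q x)%:R * ((1 - eps x) / #|argmaxA q x|%:R)).

Definition Hop (eps : X -> R) (q : X -> Act -> R) : X -> Act -> R :=
  Qpol (eps_greedy eps q).

Definition supZ (f : X -> Act -> R) : R :=
  \big[Num.max/0]_(p : X * Act | p.2 \in A p.1) `|f p.1 p.2|.

Definition supX (f : X -> R) : R := \big[Num.max/0]_(x : X) `|f x|.

End MDP.

(* Let V_pi be the value of the eps-greedy policy, and D = sup_y (Vs y - V_pi y).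
   One-step unfolding gives Qs - H = gamma P (Vs - V_pi), so 0 <= Qs - H <= gamma D.
   Fix x and a maximiser b of Qs x; as Vs x <= Qs x b,
   Vs x - V_pi x <= sum_a pi x a (Qs x b - H x a).  On the uniform part each term
   is at most 2 |Qs| + gamma D; on a greedy action a, q x a >= q x b gives
   Qs x b - Qs x a <= (Qs - q) x b + max (q - Qs) 0 x a.  Hence D <= C + gamma D,
   with C the bracket of the bound, so D <= C / (1 - gamma) and
   |H - Qs| <= gamma D. *)

From HB Require Import structures.
From mathcomp Require Import all_boot all_order all_algebra.
From mathcomp Require Import all_classical all_reals all_analysis.
From mathcomp Require Import ring lra.
Set Implicit Arguments. Unset Strict Implicit. Unset Printing Implicit Defensive.
Import Order.TTheory GRing.Theory Num.Theory.
Import numFieldNormedType.Exports.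
Local Open Scope classical_set_scope.
Local Open Scope ring_scope.

Section ConvexCombination.
Variables (R : realDomainType) (I : finType) (w : I -> R).
Hypotheses (w_ge0 : forall i, 0 <= w i) (w_sum1 : \sum_i w i = 1).

Lemma convex_sum_le (f : I -> R) c :
  (forall i, w i != 0 -> f i <= c) -> \sum_i w i * f i <= c.
Proof.
move=> f_le; apply: (@le_trans _ _ (\sum_i w i * c)); last first.
  by rewrite -mulr_suml w_sum1 mul1r.
apply: ler_sum => i _; have [->|wi_neq0] := eqVneq (w i) 0; first by rewrite !mul0r.
by rewrite ler_wpM2l // f_le.
Qed.

Lemma norm_convex_sum_le (f : I -> R) c :
  (forall i, w i != 0 -> `|f i| <= c) -> `|\sum_i w i * f i| <= c.
Proof.
move=> f_le; rewrite ler_norml; apply/andP; split.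
  rewrite lerNl -sumrN; under eq_bigr do rewrite -mulrN.
  by apply: convex_sum_le => i /f_le; rewrite ler_norml lerNl => /andP[].
by apply: convex_sum_le => i /f_le; rewrite ler_norml => /andP[].
Qed.

End ConvexCombination.

Lemma cvgn_geometric_increments (R : realType) (u : R^nat) (G r : R) :
  0 <= r -> r < 1 -> (forall n, `|u n.+1 - u n| <= G * r ^+ n) -> cvgn u.
Proof.
move=> r_ge0 r_lt1 du.
have G_ge0 : 0 <= G by have := du 0%N; rewrite expr0 mulr1; apply: le_trans.
have -> : u = (fun n => u 0%N + series (telescope u) n).
  by apply/funext => n; exact: eq_sum_telescope.
apply: is_cvgD; first exact: is_cvg_cst.
apply: normed_cvg; apply: (@series_le_cvg _ _ (geometric G r)).
- by move=> n; exact: normr_ge0.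
- by move=> n; rewrite /geometric /= mulr_ge0 // exprn_ge0.
- exact: du.
- by apply: is_cvg_geometric_series; rewrite ger0_norm.
Qed.

Section UniformWeights.
Context {R : numFieldType} {T : finType}.

Definition uniform_on (S : {set T}) (a : T) : R := (a \in S)%:R / #|S|%:R.

Lemma uniform_on_ge0 (S : {set T}) a : 0 <= uniform_on S a.
Proof. by rewrite divr_ge0 ?ler0n. Qed.

Lemma sum_uniform_on (S : {set T}) : (exists a, a \in S) -> \sum_a uniform_on S a = 1.
Proof.
move=> [a aS]; rewrite -mulr_suml.
have -> : \sum_b ((b \in S)%:R : R) = #|S|%:R.
  rewrite -sumr_const [RHS]big_mkcond; apply: eq_bigr => b _.
  by case: (b \in S).
by rewrite mulfV // pnatr_eq0 -lt0n; apply/card_gt0P; exists a.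
Qed.

End UniformWeights.

Section MaxNorms.
Variables (R : realType) (X Act : finType) (A : X -> {set Act}).

Lemma supZ_ge0 (f : X -> Act -> R) : 0 <= supZ A f.
Proof. by apply: (big_ind (fun x => 0 <= x)) => // x y x_ge0 _; rewrite le_max x_ge0. Qed.

Lemma norm_le_supZ (f : X -> Act -> R) x a : a \in A x -> `|f x a| <= supZ A f.
Proof. by move=> aA; apply: (le_bigmax_cond _ (j := (x, a))). Qed.

Lemma le_supZ (f : X -> Act -> R) x a : a \in A x -> f x a <= supZ A f.
Proof. by move=> aA; apply: le_trans (ler_norm _) (norm_le_supZ f aA). Qed.

Lemma supX_ge0 (f : X -> R) : 0 <= supX f.
Proof. by apply: (big_ind (fun x => 0 <= x)) => // x y x_ge0 _; rewrite le_max x_ge0. Qed.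

Lemma le_supX (f : X -> R) x : f x <= supX f.
Proof. by apply: le_trans (ler_norm _) _; apply: (le_bigmax _ _ x). Qed.

End MaxNorms.

Section Values.
Variables (R : realType) (X Act : finType) (A : X -> {set Act}).
Variables (P : X -> Act -> X -> R) (g : X -> Act -> X -> R) (gamma : R).
Hypothesis P_distr :
  forall x a, a \in A x -> (forall y, 0 <= P x a y) /\ \sum_(y : X) P x a y = 1.
Hypotheses (gamma_ge0 : 0 <= gamma) (gamma_lt1 : gamma < 1).

Local Notation J := (horizon_value P g gamma).
Local Notation V := (value P g gamma).
Local Notation Vs := (Vstar A P g gamma).
Local Notation Qs := (Qstar A P g gamma).

Definition reward_bound : R :=
  \big[Num.max/0]_(p : X * Act * X | p.1.2 \in A p.1.1) `|g p.1.1 p.1.2 p.2|.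

Lemma reward_bound_ge0 : 0 <= reward_bound.
Proof. by apply: (big_ind (fun x => 0 <= x)) => // x y x_ge0 _; rewrite le_max x_ge0. Qed.

Lemma norm_reward_le x a y : a \in A x -> `|g x a y| <= reward_bound.
Proof. by move=> aA; apply: (le_bigmax_cond _ (j := (x, a, y))). Qed.

Definition value_bound : R := reward_bound / (1 - gamma).

Lemma value_bound_ge0 : 0 <= value_bound.
Proof. by rewrite divr_ge0 ?reward_bound_ge0 // subr_ge0 ltW. Qed.

Lemma value_bound_fixed : reward_bound + gamma * value_bound = value_bound.
Proof.
have -> : reward_bound = value_bound * (1 - gamma).
  by rewrite divfK // subr_eq0 gt_eqF.
ring.
Qed.

Lemma transition_sum_le x a (f : X -> R) c :
  a \in A x -> (forall y, f y <= c) -> \sum_y P x a y * f y <= c.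
Proof. by move=> aA f_le; case: (P_distr aA) => P_ge0 P_sum1; apply: convex_sum_le. Qed.

Lemma norm_transition_sum_le x a (f : X -> R) c :
  a \in A x -> (forall y, `|f y| <= c) -> `|\sum_y P x a y * f y| <= c.
Proof. by move=> aA f_le; case: (P_distr aA) => P_ge0 P_sum1; apply: norm_convex_sum_le. Qed.

Lemma horizon_valueS (Pi : gpolicy R X Act) n h x : J Pi n.+1 h x =
  \sum_a Pi (size h) h x a * \sum_y P x a y * (g x a y + gamma * J Pi n (rcons h (x, a)) y).
Proof. by []. Qed.

Section GeneralPolicy.
Variable Pi : gpolicy R X Act.
Hypothesis Pi_policy : is_gpolicy A Pi.

Lemma gpolicy_support t h x a : Pi t h x a != 0 -> a \in A x.
Proof.
by apply: contraNT => aA; case: (Pi_policy t h x) => _ /(_ a aA) -> _; rewrite eqxx.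
Qed.

Lemma gpolicy_sum_le t h x (f : Act -> R) c :
  (forall a, a \in A x -> f a <= c) -> \sum_a Pi t h x a * f a <= c.
Proof.
move=> f_le; case: (Pi_policy t h x) => Pi_ge0 _ Pi_sum1.
by apply: convex_sum_le => // a /gpolicy_support /f_le.
Qed.

Lemma norm_gpolicy_sum_le t h x (f : Act -> R) c :
  (forall a, a \in A x -> `|f a| <= c) -> `|\sum_a Pi t h x a * f a| <= c.
Proof.
move=> f_le; case: (Pi_policy t h x) => Pi_ge0 _ Pi_sum1.
by apply: norm_convex_sum_le => // a /gpolicy_support /f_le.
Qed.

Lemma norm_horizon_value_le n h x : `|J Pi n h x| <= value_bound.
Proof.
elim: n h x => [|n IHn] h x /=; first by rewrite normr0 value_bound_ge0.
apply: norm_gpolicy_sum_le => a aA; apply: norm_transition_sum_le => // y.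
rewrite -value_bound_fixed; apply: le_trans (ler_normD _ _) _.
by rewrite lerD ?norm_reward_le // normrM ger0_norm // ler_wpM2l.
Qed.

Lemma horizon_value_increment n h x :
  `|J Pi n.+1 h x - J Pi n h x| <= reward_bound * gamma ^+ n.
Proof.
elim: n h x => [|n IHn] h x.
  rewrite /= subr0 expr0 mulr1; apply: norm_gpolicy_sum_le => a aA.
  by apply: norm_transition_sum_le => // y; rewrite mulr0 addr0 norm_reward_le.
rewrite horizon_valueS [J _ n.+1 h x]horizon_valueS -sumrB.
under eq_bigr do rewrite -mulrBr -sumrB.
apply: norm_gpolicy_sum_le => a aA.
under eq_bigr do rewrite -mulrBr opprD addrACA subrr add0r -mulrBr.
apply: norm_transition_sum_le => // y.
by rewrite normrM ger0_norm // exprS mulrCA ler_wpM2l.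
Qed.

Lemma is_cvg_horizon_value h x : cvgn (fun n => J Pi n h x).
Proof.
apply: (@cvgn_geometric_increments _ _ reward_bound gamma) => // n.
exact: horizon_value_increment.
Qed.

Lemma value_le_bound x : V Pi x <= value_bound.
Proof.
apply: limr_le; first exact: is_cvg_horizon_value.
by apply: nearW => n; have := norm_horizon_value_le n [::] x; rewrite ler_norml => /andP[].
Qed.

End GeneralPolicy.

Definition shift_gpolicy (Pi : gpolicy R X Act) (p : X * Act) : gpolicy R X Act :=
  fun t h => Pi t.+1 (p :: h).

Lemma is_gpolicy_shift Pi p : is_gpolicy A Pi -> is_gpolicy A (shift_gpolicy Pi p).
Proof. by move=> Pi_policy t h x; apply: Pi_policy. Qed.

Lemma horizon_value_cons Pi p n h x : J Pi n (p :: h) x = J (shift_gpolicy Pi p) n h x.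
Proof.
elim: n h x => // n IHn h x; rewrite !horizon_valueS /=.
by apply: eq_bigr => a _; congr (_ * _); apply: eq_bigr => y _; rewrite IHn.
Qed.

Lemma value_unfold Pi x : is_gpolicy A Pi ->
  V Pi x = \sum_a Pi 0%N [::] x a *
             \sum_y P x a y * (g x a y + gamma * V (shift_gpolicy Pi (x, a)) y).
Proof.
move=> Pi_policy; apply: cvg_lim => //; rewrite -cvg_shiftS /mk_sequence.
under eq_cvg do (rewrite horizon_valueS;
  under eq_bigr do under eq_bigr do rewrite horizon_value_cons).
apply: cvg_big => [|a _]; first exact: add_continuous.
apply: cvgM; first exact: cvg_cst.
apply: cvg_big => [|y _]; first exact: add_continuous.
apply: cvgM; first exact: cvg_cst.
apply: cvgD; first exact: cvg_cst.
apply: cvgM; first exact: cvg_cst.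
by apply: is_cvg_horizon_value; apply: is_gpolicy_shift.
Qed.

Lemma value_le_Vstar Pi x : is_gpolicy A Pi -> V Pi x <= Vs x.
Proof.
move=> Pi_policy; apply: ub_le_sup; last by exists Pi.
by exists value_bound => _ [Pi' Pi'_policy <-]; apply: value_le_bound.
Qed.

Lemma rewD_expectation (f : X -> R) x a :
  rew P g x a + gamma * \sum_y P x a y * f y = \sum_y P x a y * (g x a y + gamma * f y).
Proof. by rewrite /rew mulr_sumr -big_split; apply: eq_bigr => y _ /=; ring. Qed.

Lemma Vstar_le_Qstar x c : (exists Pi : gpolicy R X Act, is_gpolicy A Pi) ->
  (forall a, a \in A x -> Qs x a <= c) -> Vs x <= c.
Proof.
move=> [Pi0 Pi0_policy] Qs_le; apply: ge_sup; first by exists (V Pi0 x), Pi0.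
move=> _ [Pi Pi_policy <-]; rewrite value_unfold //.
apply: gpolicy_sum_le => // a aA; apply: le_trans (Qs_le a aA).
rewrite /Qstar rewD_expectation; apply: ler_sum => y _.
have [P_ge0 _] := P_distr aA.
by rewrite ler_wpM2l // lerD2l ler_wpM2l // value_le_Vstar //; exact: is_gpolicy_shift.
Qed.

Lemma is_gpolicy_sm (pi : X -> Act -> R) : is_smpolicy A pi -> is_gpolicy A (gpolicy_of_sm pi).
Proof. by move=> pi_policy t h x; apply: pi_policy. Qed.

Section EpsGreedy.
Variables (eps : X -> R) (q : X -> Act -> R).
Hypothesis A_nonempty : forall x, exists a, a \in A x.
Hypothesis eps_in01 : forall x, 0 <= eps x <= 1.

Local Notation pi := (eps_greedy A eps q).
Local Notation H := (Hop A P g gamma eps q).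
Local Notation Vpi := (V (gpolicy_of_sm pi)).

Lemma argmaxA_subset x a : a \in argmaxA A q x -> a \in A x.
Proof. by rewrite inE => /andP[]. Qed.

Lemma argmaxA_max x a b : a \in argmaxA A q x -> b \in A x -> q x b <= q x a.
Proof. by rewrite inE => /andP[_ /forallP a_max] bA; move/implyP: (a_max b); apply. Qed.

Lemma argmaxA_nonempty x : exists a, a \in argmaxA A q x.
Proof.
have [a0 a0A] := A_nonempty x.
have [b bA b_max] := @arg_maxP _ _ _ a0 [pred a | a \in A x] (q x) a0A.
by exists b; rewrite inE; apply/andP; split => //; apply/forallP => a; apply/implyP; apply: b_max.
Qed.

Lemma eps_greedyE x a :
  pi x a = eps x * uniform_on (A x) a + (1 - eps x) * uniform_on (argmaxA A q x) a.
Proof.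
rewrite /eps_greedy /uniform_on.
have [aA|aNA] := boolP (a \in A x); last first.
  by rewrite (contraNF (@argmaxA_subset x a)) // !mul0r !mulr0 addr0.
by case: (a \in argmaxA A q x) => /=; ring.
Qed.

Lemma sum_eps_greedy x (f : Act -> R) : \sum_a pi x a * f a =
  eps x * \sum_a uniform_on (A x) a * f a
  + (1 - eps x) * \sum_a uniform_on (argmaxA A q x) a * f a.
Proof.
rewrite !mulr_sumr -big_split; apply: eq_bigr => a _ /=.
by rewrite eps_greedyE; ring.
Qed.

Lemma is_smpolicy_eps_greedy : is_smpolicy A pi.
Proof.
move=> x; have /andP[eps_ge0 eps_le1] := eps_in01 x; split.
- move=> a; rewrite eps_greedyE.
  by rewrite addr_ge0 // mulr_ge0 ?uniform_on_ge0 // subr_ge0.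
- by move=> a aNA; rewrite /eps_greedy (negbTE aNA) mul0r.
- under eq_bigr do rewrite -[pi x _]mulr1.
  rewrite sum_eps_greedy; under eq_bigr do rewrite mulr1.
  under [X in _ + _ * X]eq_bigr do rewrite mulr1.
  by rewrite (sum_uniform_on (A_nonempty x)) (sum_uniform_on (argmaxA_nonempty x)); ring.
Qed.

Lemma is_gpolicy_eps_greedy : is_gpolicy A (gpolicy_of_sm pi).
Proof. exact/is_gpolicy_sm/is_smpolicy_eps_greedy. Qed.

Lemma value_eps_greedy x : Vpi x = \sum_a pi x a * H x a.
Proof.
rewrite value_unfold; last exact: is_gpolicy_eps_greedy.
by apply: eq_bigr => a _; rewrite /Hop /Qpol rewD_expectation.
Qed.

Lemma Qstar_sub_Hop x a : Qs x a - H x a = gamma * \sum_y P x a y * (Vs y - Vpi y).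
Proof.
rewrite /Qstar /Hop /Qpol.
under [X in _ = _ * X]eq_bigr do rewrite mulrBr.
by rewrite sumrB; ring.
Qed.

Local Notation gap := (supX (fun y => Vs y - Vpi y)).

Lemma expected_gap_bounds x a : a \in A x ->
  0 <= \sum_y P x a y * (Vs y - Vpi y) <= gap.
Proof.
move=> aA; have [P_ge0 _] := P_distr aA; apply/andP; split.
  apply: sumr_ge0 => y _; rewrite mulr_ge0 // subr_ge0.
  by apply: value_le_Vstar; exact: is_gpolicy_eps_greedy.
by apply: transition_sum_le => // y; exact: le_supX (fun y => Vs y - Vpi y) y.
Qed.

Lemma Hop_le_Qstar x a : a \in A x -> H x a <= Qs x a.
Proof.
move=> aA; rewrite -subr_ge0 Qstar_sub_Hop mulr_ge0 //.
by case/andP: (expected_gap_bounds aA).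
Qed.

Lemma Qstar_sub_Hop_le x a : a \in A x -> Qs x a - H x a <= gamma * gap.
Proof.
move=> aA; rewrite Qstar_sub_Hop ler_wpM2l //.
by case/andP: (expected_gap_bounds aA).
Qed.

Local Notation C1 := (supZ A (fun x a => Qs x a - q x a)).
Local Notation C2 := (supZ A (fun x a => Num.max (q x a - Qs x a) 0)).

Section QstarMaximizer.
Variables (x : X) (b : Act).
Hypotheses (bA : b \in A x) (b_max : forall a, a \in A x -> Qs x a <= Qs x b).

Lemma Vstar_sub_value_le_gaps : Vs x - Vpi x <= \sum_a pi x a * (Qs x b - H x a).
Proof.
have pi_sum1 : \sum_a pi x a = 1 by case: (is_smpolicy_eps_greedy x).
have Vs_le : Vs x <= Qs x b.
  by apply: Vstar_le_Qstar => //; exists (gpolicy_of_sm pi); exact: is_gpolicy_eps_greedy.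
under eq_bigr do rewrite mulrBr.
by rewrite sumrB -mulr_suml pi_sum1 mul1r -value_eps_greedy lerB.
Qed.

Lemma uniform_gaps_le :
  \sum_a uniform_on (A x) a * (Qs x b - H x a) <= 2 * supZ A Qs + gamma * gap.
Proof.
apply: convex_sum_le; [exact: uniform_on_ge0 | exact: sum_uniform_on (A_nonempty x) | ].
move=> a; rewrite /uniform_on; have [aA _|] := boolP (a \in A x); last first.
  by rewrite mul0r eqxx.
have := Qstar_sub_Hop_le aA; have := norm_le_supZ Qs aA; have := norm_le_supZ Qs bA.
rewrite !ler_norml => /andP[_ Qb_le] /andP[Qa_ge _]; lra.
Qed.

Lemma greedy_gaps_le :
  \sum_a uniform_on (argmaxA A q x) a * (Qs x b - H x a) <= C1 + C2 + gamma * gap.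
Proof.
apply: convex_sum_le; [exact: uniform_on_ge0 | exact: sum_uniform_on (argmaxA_nonempty x) | ].
move=> a; rewrite /uniform_on; have [aM _|] := boolP (a \in argmaxA A q x); last first.
  by rewrite mul0r eqxx.
have aA := argmaxA_subset aM; have q_le := argmaxA_max aM bA.
have := Qstar_sub_Hop_le aA.
have := le_supZ (fun x a => Qs x a - q x a) bA.
have := le_supZ (fun x a => Num.max (q x a - Qs x a) 0) aA.
have : q x a - Qs x a <= Num.max (q x a - Qs x a) 0 by rewrite le_max lexx.
move=> /= ? ? ? ?; lra.
Qed.

End QstarMaximizer.

Local Notation C := (C1 + C2 + 2 * supZ A Qs * supX eps).

Lemma Vstar_sub_value_le x : Vs x - Vpi x <= C + gamma * gap.
Proof.
have [a0 a0A] := A_nonempty x.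
have [b bA b_max] := @arg_maxP _ _ _ a0 [pred a | a \in A x] (Qs x) a0A.
apply: le_trans (Vstar_sub_value_le_gaps b_max) _; rewrite sum_eps_greedy.
have /andP[eps_ge0 eps_le1] := eps_in01 x.
have one_sub_eps_ge0 : 0 <= 1 - eps x by rewrite subr_ge0.
have := ler_wpM2l eps_ge0 (uniform_gaps_le bA).
have := ler_wpM2l one_sub_eps_ge0 (greedy_gaps_le bA).
have := le_supX eps x; have := supZ_ge0 A Qs.
have := supZ_ge0 A (fun x a => Qs x a - q x a).
have := supZ_ge0 A (fun x a => Num.max (q x a - Qs x a) 0).
nra.
Qed.

Lemma C_ge0 : 0 <= C.
Proof. by rewrite !addr_ge0 ?mulr_ge0 ?supZ_ge0 ?supX_ge0. Qed.

Lemma gap_le : gap <= C / (1 - gamma).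
Proof.
have gap_le_contraction : gap <= C + gamma * gap.
  apply: bigmax_le => [|y _]; first by rewrite addr_ge0 ?C_ge0 ?mulr_ge0 ?supX_ge0.
  rewrite ger0_norm ?Vstar_sub_value_le // subr_ge0.
  by apply: value_le_Vstar; exact: is_gpolicy_eps_greedy.
by rewrite ler_pdivlMr ?subr_gt0 //; nra.
Qed.

Lemma supZ_Hop_sub_Qstar_le :
  supZ A (fun x a => H x a - Qs x a) <= gamma / (1 - gamma) * C.
Proof.
apply: bigmax_le => [|[x a] /= aA].
  by rewrite mulr_ge0 ?C_ge0 // divr_ge0 // subr_ge0 ltW.
rewrite distrC ger0_norm ?subr_ge0 ?Hop_le_Qstar // mulrAC -mulrA.
by apply: le_trans (Qstar_sub_Hop_le aA) _; rewrite ler_wpM2l // gap_le.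
Qed.

End EpsGreedy.

End Values.

Theorem lemma3p1 (R : realType) (X Act : finType) (A : X -> {set Act})
  (P : X -> Act -> X -> R) (S : X -> Act -> X -> probability R R) (gamma : R)
  (eps : X -> R) (q : X -> Act -> R) :
  (exists x0 : X, True) ->
  (forall x, exists a : Act, a \in A x) ->
  (forall x a, a \in A x -> (forall y, 0 <= P x a y) /\ \sum_(y : X) P x a y = 1) ->
  (forall x a y, a \in A x ->
     (S x a y).-integrable setT (fun z : R => (z ^+ 2)%:E)) ->
  0 <= gamma -> gamma < 1 ->
  (forall x, 0 <= eps x <= 1) ->
  let g := mean_reward S in
  let H := Hop A P g gamma eps q in
  let Qs := Qstar A P g gamma in
  (forall x a, a \in A x -> H x a <= Qs x a) /\
  supZ A (fun x a => H x a - Qs x a)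
    <= gamma / (1 - gamma) *
       (supZ A (fun x a => Qs x a - q x a)
        + supZ A (fun x a => Num.max (q x a - Qs x a) 0)
        + 2 * supZ A Qs * supX eps).
Proof.
move=> _ A_nonempty P_distr _ gamma_ge0 gamma_lt1 eps_in01 g H Qs; split.
- by move=> x a; apply: Hop_le_Qstar.
- exact: supZ_Hop_sub_Qstar_le.
Qed.
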